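(* Fix integers $2\le k\le n$, $M=\lceil n/k\rceil$, and let the shadow images $1,\ldots,n$ be split into $M$ groups, group $j$ consisting of images $(j-1)k+1,\ldots,\min(jk,n)$; write $|\mathcal{G}_M|=n-(M-1)k$ for the size of the last group. Let $\vec\lambda=(\lambda_1,\ldots,\lambda_M)$ be a valid partition of $t=\sum_i\lambda_i$, and write its multiset of components as $\{l_1^{d_1},\ldots,l_r^{d_r}\}$, where $l_1,\ldots,l_r$ are the distinct values among $\lambda_1,\ldots,\lambda_M$ and $d_g$ is the multiplicity of $l_g$. Let $\beta_{\vec\lambda}$ be the probability that a uniformly random $t$-element subset of the $n$ shadow images contains, from groups $1,\ldots,M$, numbers of images forming a rearrangement of $\vec\lambda$ (i.e., a vector $(\lambda_{\varphi(1)},\ldots,\lambda_{\varphi(M)})$ for some permutation $\varphi$). Then $$\beta_{\vec\lambda}=\frac{1}{\binom{n}{t}}\sum_{g=1}^{r}\left[\binom{|\mathcal{G}_M|}{l_g}\,\frac{\prod_{i=1}^{r}\binom{k}{l_i}^{d_i}}{\binom{k}{l_g}}\cdot\frac{(M-1)!}{d_1!\cdots d_{g-1}!\,(d_g-1)!\,d_{g+1}!\cdots d_r!}\right],$$ with the convention $\binom{a}{b}=0$ when $b>a$.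
   Context: A valid partition is a vector $\vec\lambda=(\lambda_1,\ldots,\lambda_M)$ of non-negative integers with $\max_j\lambda_j\le k$ and $\lambda_M\le n-(M-1)k$. *)

From mathcomp Require Import all_boot all_order all_algebra.
Set Implicit Arguments. Unset Strict Implicit. Unset Printing Implicit Defensive.
Import GRing.Theory Num.Theory.

(* Number of groups M = ceil(n/k) (for k >= 1). *)
Definition ngroups (n k : nat) : nat := (n + k.-1) %/ k.

Definition last_size (n k : nat) : nat := n - (ngroups n k).-1 * k.

(* Images are 0-indexed: image i (0 <= i < n) lies in group i %/ k
   (groups 0-indexed: 0..M-1). *)
Definition group_counts (n k : nat) (S : {set 'I_n}) : seq nat :=
  [seq #|[set i in S | (val i) %/ k == j]| | j <- iota 0 (ngroups n k)].

Definition valid_partition (n k : nat) (lam : seq nat) : bool :=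
  [&& size lam == ngroups n k,
      all (fun x => x <= k) lam &
      nth 0 lam (ngroups n k).-1 <= last_size n k].

Definition beta (n k : nat) (lam : seq nat) : rat :=
  (#|[set S : {set 'I_n} | (#|S| == sumn lam) && perm_eq (group_counts k S) lam]|%:R
     / ('C(n, sumn lam))%:R)%R.

From mathcomp Require Import all_boot all_order all_algebra.
From mathcomp Require Import zify.
Set Implicit Arguments. Unset Strict Implicit. Unset Printing Implicit Defensive.
Import GRing.Theory Num.Theory.

(* A subset is determined by its traces on the groups, so exactly
   \prod_j 'C(|G_j|, mu_j) subsets have group-count vector mu.  All groups but
   the last have k images, hence this number depends on mu only through its
   last entry l and equals 'C(|G_M|, l) * \prod_i 'C(k, l_i)^d_i / 'C(k, l).
   Summing over the distinct rearrangements mu of lambda grouped by their last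
   entry, the number of rearrangements ending in l_g is the multinomial
   coefficient (M-1)! / (d_1! ... (d_g - 1)! ... d_r!). *)

Section Permutations.
Variable T : eqType.

Lemma sum_count_mem_undup (s : seq T) : \sum_(x <- undup s) count_mem x s = size s.
Proof.
rewrite -(perm_size (perm_count_undup s)) size_flatten /shape -map_comp sumnE big_map.
by apply: eq_bigr => x _ /=; rewrite size_nseq.
Qed.

Lemma size_permutations_prod_fact (u s : seq T) : uniq u -> {subset s <= u} ->
  size (permutations s) * \prod_(x <- u) (count_mem x s)`! = (size s)`!.
Proof.
move=> u_uniq; move size_s: (size s) => m.
elim: m s size_s => [|m IHm] s size_s s_u.
  by case: s size_s s_u => // _ _; rewrite big1.
have s_gt0 : 0 < size s by rewrite size_s.
rewrite (perm_size (permutationsE s_gt0)) size_allpairs_dep sumnE big_map big_distrl /=.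
rewrite factS -size_s -[in RHS](sum_count_mem_undup s) big_distrl /=.
apply: eq_big_seq => x; rewrite mem_undup => s_x.
have size_rem : size (rem x s) = m by rewrite size_rem // size_s.
have count_mem_rem y : count_mem y (rem x s) = count_mem y s - (y == x).
  by rewrite count_rem s_x /= eq_sym.
have count_x : count_mem x s = (count_mem x (rem x s)).+1.
  by rewrite count_mem_rem eqxx subn1 prednK // -has_count has_pred1.
have prod_rem : \prod_(y <- u | y != x) (count_mem y (rem x s))`! =
                \prod_(y <- u | y != x) (count_mem y s)`!.
  by apply: eq_bigr => y y_x; rewrite count_mem_rem (negbTE y_x) subn0.
have := IHm _ size_rem (fun y y_rem => s_u y (mem_rem y_rem)).
rewrite !(bigD1_seq x (s_u x s_x) u_uniq) /= count_x factS prod_rem => <-; lia.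
Qed.

Lemma size_permutations_rem (R : numFieldType) (s : seq T) x : x \in s ->
  ((size (permutations (rem x s)))%:R =
   ((size s).-1)`!%:R / \prod_(y <- undup s) ((count_mem y s - (y == x))`!)%:R :> R)%R.
Proof.
move=> s_x; have := @size_permutations_prod_fact _ (rem x s) (undup_uniq s)
  (fun y y_rem => etrans (mem_undup s y) (mem_rem y_rem)).
under eq_bigr => y _ do rewrite count_rem s_x /= eq_sym.
rewrite size_rem // => <-; rewrite natrM -natr_prod mulfK //.
by rewrite pnatr_eq0 -lt0n prodn_gt0 // => y; apply: fact_gt0.
Qed.

Lemma perm_map_rev_permutations (s : seq T) :
  perm_eq (map rev (permutations s)) (permutations s).
Proof.
apply: uniq_perm; rewrite ?(map_inj_uniq (can_inj revK)) ?permutations_uniq // => t.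
by rewrite -{1}(revK t) (mem_map (can_inj revK)) !mem_permutations perm_rev.
Qed.

Lemma sum_permutations_last (R : nmodType) (x0 : T) (F : T -> R) (s : seq T) :
  0 < size s ->
  (\sum_(t <- permutations s) F (last x0 t) =
   \sum_(x <- undup s) F x *+ size (permutations (rem x s)))%R.
Proof.
move=> s_gt0; rewrite -(perm_big _ (perm_map_rev_permutations s)) big_map.
rewrite (perm_big _ (permutationsE s_gt0)) big_allpairs_dep /=.
apply: eq_bigr => x _.
under eq_bigr => t _ do rewrite rev_cons last_rcons.
by rewrite big_const_seq count_predT iter_addr_0.
Qed.
End Permutations.

Section BlockCounts.
Variables (T I : finType) (g : T -> I).

Lemma card_set_block_counts (c : I -> nat) :
  #|[set S : {set T} | [forall j, #|[set x in S | g x == j]| == c j]]| =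
  \prod_(j : I) 'C(#|[set x | g x == j]|, c j).
Proof.
pose F j := [pred A : {set T} | (A \subset [set x | g x == j]) && (#|A| == c j)].
pose glue (f : {ffun I -> {set T}}) := \bigcup_j f j.
have glueK f : f \in family F -> forall j, [set x in glue f | g x == j] = f j.
  move=> /familyP f_F j; apply/setP => x; rewrite inE.
  apply/andP/idP => [[/bigcupP [i _ x_fi] /eqP <-] | x_fj].
    by have /andP [/subsetP/(_ x x_fi)] := f_F i; rewrite inE => /eqP ->.
  have /andP [/subsetP/(_ x x_fj)] := f_F j; rewrite inE => /eqP gx _.
  by split; [apply/bigcupP; exists j | rewrite gx].
have glue_inj : {in family F &, injective glue}.
  by move=> f f' f_F f'_F eq_glue; apply/ffunP => j; rewrite -!glueK // eq_glue.
have -> : [set S : {set T} | [forall j, #|[set x in S | g x == j]| == c j]] =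
          glue @: family F.
  apply/setP => S; rewrite inE; apply/forallP/imsetP => [S_c | [f f_F ->] j].
    exists [ffun j => [set x in S | g x == j]].
      apply/familyP => j; rewrite ffunE inE S_c andbT.
      by apply/subsetP => x; rewrite !inE => /andP [].
    apply/setP => x; apply/idP/bigcupP => [x_S | [j _]].
      by exists (g x); rewrite // ffunE inE x_S /=.
    by rewrite ffunE inE => /andP [].
  by rewrite glueK //; have /andP [] := familyP f_F j.
rewrite card_in_imset // card_family foldrE big_map big_enum.
by apply: eq_bigr => j _; rewrite -cards_draws; apply: eq_card => A; rewrite !inE.
Qed.

End BlockCounts.

Lemma card_perm_eq_preim (T : finType) (X : eqType) (f : T -> seq X) (s : seq X) :
  #|[set x | perm_eq (f x) s]| = \sum_(t <- permutations s) #|[set x | f x == t]|.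
Proof.
have count_perms x : (perm_eq (f x) s : nat) = \sum_(t <- permutations s) (f x == t : nat).
  rewrite -mem_permutations -count_uniq_mem ?permutations_uniq // -sum1_count big_mkcond.
  by apply: eq_bigr => t _; rewrite /= eq_sym; case: eqP.
rewrite -sum1_card big_mkcond /=.
under eq_bigr => x _ do rewrite inE -[if _ then _ else _]/(nat_of_bool _) count_perms.
rewrite exchange_big; apply: eq_bigr => t _.
by rewrite -sum1_card [RHS]big_mkcond; apply: eq_bigr => x _; rewrite inE; case: eqP.
Qed.

Section Groups.
Variables n k : nat.
Hypothesis k_gt0 : 0 < k.

Local Notation M := (ngroups n k).

Lemma leq_ngroups_mul : n <= M * k.
Proof. by have := ltn_ceil (n + k.-1) k_gt0; rewrite mulSn -/M; lia. Qed.

Lemma pred_ngroups_mul_lt : 0 < n -> M.-1 * k < n.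
Proof.
move=> n_gt0; have := leq_trunc_div (n + k.-1) k; rewrite -/M.
by case: M => [|m] /=; rewrite ?mul0n // mulSn; lia.
Qed.

Lemma ngroups_gt0 : 0 < n -> 0 < M.
Proof. by move=> n_gt0; have := leq_ngroups_mul; case: M; rewrite // mul0n leqNgt n_gt0. Qed.

Lemma ltn_div_ngroups (i : 'I_n) : i %/ k < M.
Proof. by rewrite ltn_divLR // (leq_trans (ltn_ord i) leq_ngroups_mul). Qed.

Definition group_of (i : 'I_n) : 'I_M := Ordinal (ltn_div_ngroups i).

Lemma card_group j : #|[set i : 'I_n | i %/ k == j]| = minn n (j.+1 * k) - minn n (j * k).
Proof.
rewrite -sum1_card big_mkcond /=.
under eq_bigr => i _ do rewrite inE.
rewrite -(big_mkord xpredT (fun i => if i %/ k == j then 1 else 0)).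
elim: n => [|m IHm]; first by rewrite big_geq // !min0n.
rewrite big_nat_recr //= IHm eqn_leq leq_divRL // -ltnS ltn_divLR // mulSn.
by case: ifP => /andP; lia.
Qed.

Lemma group_countsE (S : {set 'I_n}) (mu : seq nat) : size mu = M ->
  (group_counts k S == mu) = [forall j, #|[set i in S | group_of i == j]| == nth 0 mu j].
Proof.
move=> size_mu; apply/eqP/forallP => [<- j | mu_S].
  by rewrite /group_counts (nth_map 0) ?size_iota // nth_iota.
apply: (@eq_from_nth _ 0) => [|j]; rewrite size_map size_iota // => j_lt.
by rewrite (nth_map 0) ?size_iota // nth_iota //; apply/eqP/(mu_S (Ordinal j_lt)).
Qed.

Lemma sumn_group_counts (S : {set 'I_n}) : sumn (group_counts k S) = #|S|.
Proof.
rewrite /group_counts sumnE big_map -{1}(subn0 M) -/(index_iota 0 M) big_mkord.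
rewrite -sum1_card (partition_big group_of xpredT) //=.
by apply: eq_bigr => j _; rewrite -sum1_card; apply: eq_bigl => i; rewrite inE.
Qed.

Lemma card_group_counts_eq (mu : seq nat) : size mu = M ->
  #|[set S : {set 'I_n} | group_counts k S == mu]| =
  \prod_(j < M) 'C(minn n (j.+1 * k) - minn n (j * k), nth 0 mu j).
Proof.
move=> size_mu.
have -> : [set S : {set 'I_n} | group_counts k S == mu] =
          [set S : {set 'I_n} | [forall j, #|[set i in S | group_of i == j]| == nth 0 mu j]].
  by apply/setP => S; rewrite !inE group_countsE.
rewrite card_set_block_counts; apply: eq_bigr => j _.
by rewrite -card_group; congr 'C(#|_|, _); apply/setP => i; rewrite !inE.
Qed.

Lemma card_group_counts_perm (lam mu : seq nat) :
  0 < n -> size lam = M -> perm_eq mu lam ->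
  #|[set S : {set 'I_n} | group_counts k S == mu]| * 'C(k, last 0 mu) =
  'C(last_size n k, last 0 mu) * \prod_(l <- lam) 'C(k, l).
Proof.
move=> n_gt0 size_lam mu_lam.
have size_mu : size mu = M by rewrite (perm_size mu_lam).
rewrite card_group_counts_eq // -(perm_big _ mu_lam) /= (big_nth 0) big_mkord.
rewrite -nth_last /last_size size_mu.
move: leq_ngroups_mul (pred_ngroups_mul_lt n_gt0).
case: M (ngroups_gt0 n_gt0) => // m _ /= le_n lt_n.
rewrite !big_ord_recr /=.
have full (j : 'I_m) : minn n (j.+1 * k) - minn n (j * k) = k.
  have : j.+1 * k <= m * k by rewrite leq_mul2r ltn_ord orbT.
  by rewrite mulSn; lia.
under eq_bigr => j _ do rewrite full.
have -> : minn n (m.+1 * k) - minn n (m * k) = n - m * k by lia.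
by rewrite mulnAC mulnC.
Qed.
End Groups.

Local Open Scope ring_scope.

Lemma natr_card_group_counts_perm (R : numFieldType) n k (lam mu : seq nat) :
  (0 < k)%N -> (0 < n)%N -> size lam = ngroups n k -> all (fun l => l <= k)%N lam ->
  perm_eq mu lam ->
  #|[set S : {set 'I_n} | group_counts k S == mu]|%:R =
  'C(last_size n k, last 0%N mu)%:R * \prod_(l <- undup lam) 'C(k, l)%:R ^+ count_mem l lam
    / 'C(k, last 0%N mu)%:R :> R.
Proof.
move=> k_gt0 n_gt0 size_lam lam_le_k mu_lam.
have size_mu : size mu = ngroups n k by rewrite (perm_size mu_lam).
have last_lam : last 0%N mu \in lam.
  by rewrite -(perm_mem mu_lam) -nth_last mem_nth // size_mu prednK ?ngroups_gt0.
have binom_neq0 : 'C(k, last 0%N mu)%:R != 0 :> R.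
  by rewrite pnatr_eq0 -lt0n bin_gt0 (allP lam_le_k).
by rewrite prodr_undup_exp_count -natr_prod -natrM -card_group_counts_perm // natrM mulfK.
Qed.

Theorem lemma5 (n k : nat) (lam : seq nat) :
  (2 <= k)%N -> (k <= n)%N -> valid_partition n k lam ->
  beta n k lam =
  (('C(n, sumn lam))%:R)^-1 *
  \sum_(l <- undup lam)
     ((('C(last_size n k, l))%:R
        * (\prod_(l' <- undup lam) (('C(k, l'))%:R ^+ count_mem l' lam))
        / ('C(k, l))%:R)
      * (((ngroups n k).-1)`!%:R
         / (\prod_(l' <- undup lam) ((count_mem l' lam - (l' == l))`!)%:R)) : rat).
Proof.
move=> k_ge2 k_le_n /and3P [/eqP size_lam lam_le_k _].
have k_gt0 : (0 < k)%N by apply: leq_trans k_ge2.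
have n_gt0 : (0 < n)%N by apply: leq_trans k_le_n.
rewrite /beta mulrC.
have -> : [set S : {set 'I_n} | (#|S| == sumn lam) && perm_eq (group_counts k S) lam] =
          [set S | perm_eq (group_counts k S) lam].
  apply/setP => S; rewrite !inE -(sumn_group_counts k_gt0).
  by case: (boolP (perm_eq _ _)) => [/perm_sumn -> | _]; rewrite ?eqxx ?andbF.
rewrite card_perm_eq_preim natr_sum; congr (_ * _).
under [LHS]eq_big_seq => mu /[1!mem_permutations] mu_lam do
  rewrite (natr_card_group_counts_perm _ k_gt0 n_gt0 size_lam lam_le_k mu_lam).
set binoms := \prod_(l <- undup lam) _.
rewrite (sum_permutations_last 0%N (fun l => 'C(last_size n k, l)%:R * binoms / 'C(k, l)%:R))
  ?size_lam ?ngroups_gt0 //.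
apply: eq_big_seq => l; rewrite mem_undup => l_lam.
by rewrite -[_ *+ size _]mulr_natr (size_permutations_rem rat l_lam) size_lam.
Qed.
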